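(* Let $W\in C^1(\mathbb{R}\setminus\{0\})$ satisfy $W''=-\delta_0+w$ in the distributional sense, where $\delta_0$ is the Dirac mass at $0$, $w\in C_b(\mathbb{R})$ and $\|w\|_{L^1(\mathbb{R})}=w_0<\infty$. Let $a\in C^1(\mathbb{R})$ satisfy $0\le a'(x)\le \alpha$ for all $x\in\mathbb{R}$, and let $A$ be the antiderivative of $a$ with $A(0)=0$. Let $\rho^{ini}\in\mathcal{P}_1(\mathbb{R})$ be nonnegative and compactly supported, with total mass $M=|\rho^{ini}|(\mathbb{R})$, and set $c:=\max_{x\in[-M(1+w_0),M(1+w_0)]}|a(x)|$. Consider a uniform grid $x_i=x_0+i\,\delta x$, $i=0,\dots,N_x$, with $\mathrm{supp}(\rho^{ini})\subset[x_0,x_{N_x}]$, time step $\delta t$, and $\lambda=\delta t/\delta x$. Set $\rho_i^0=\frac{1}{\delta x}\int_{[x_i,x_{i+1})}\rho^{ini}(dx)$, and for $n\ge 0$ define the sequences by the following scheme, with the boundary conventions $\rho_0^n=S_0^n=S_1^n=J_{-1/2}^n=0$ and $\rho_{N_x}^n=S_{N_x}^n=J_{N_x+1/2}^n=0$: \begin{itemize} \item $\nu_i^n=\sum_{k=1}^{N_x}\rho_k^n w_{ki}$ with $w_{ki}=\int_{(i-1-k)\delta x}^{(i-k)\delta x}w(z)\,dz$; \item $-\dfrac{S_{i+1}^n-2S_i^n+S_{i-1}^n}{\delta x^2}+\nu_i^n=\rho_i^n$; \item $\partial_xS_{i+1}^n=\dfrac{S_{i+2}^n-S_i^n}{2\delta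 x}$; \item $a_{i+1/2}^n=0$ if $\partial_xS_{i+1}^n=\partial_xS_i^n$, and $a_{i+1/2}^n=\dfrac{A(\partial_xS_{i+1}^n)-A(\partial_xS_i^n)}{\partial_xS_{i+1}^n-\partial_xS_i^n}$ otherwise; \item $J_{i+1/2}^n=-\dfrac{A(\partial_xS_{i+1}^n)-A(\partial_xS_i^n)}{\delta x}+a_{i+1/2}^n\dfrac{\nu_{i+1}^n+\nu_i^n}{2}$; \item $\rho_i^{n+1}=\rho_i^n-\dfrac{\lambda}{2}\big(J_{i+1/2}^n-J_{i-1/2}^n\big)+\dfrac{\lambda}{2}c\big(\rho_{i+1}^n-2\rho_i^n+\rho_{i-1}^n\big)$. \end{itemize} Assume the CFL condition $\lambda=\dfrac{\delta t}{\delta x}\le\dfrac{2}{3c}$. Then for all $i$ and all $n\in\mathbb{N}$, $$\rho_i^n\ge 0,\qquad |a_{i+1/2}^n|\le c.$$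
   Context: $\mathcal{P}_1(\mathbb{R})$ denotes the set of nonnegative bounded Radon measures $\mu$ on $\mathbb{R}$ with $\int_{\mathbb{R}}|x|\,d\mu(x)<\infty$. The scheme is a Lax–Friedrichs type discretization of the aggregation equation $\partial_t\rho+\partial_x(a(W'*\rho)\rho)=0$, where $S_i^n$ approximates $W*\rho$ and $\nu_i^n$ approximates $w*\rho$ at $(t_n,x_i)$, $t_n=n\delta t$. *)

From HB Require Import structures.
From mathcomp Require Import all_boot all_order all_algebra.
From mathcomp Require Import all_classical all_reals all_analysis.
Set Implicit Arguments. Unset Strict Implicit. Unset Printing Implicit Defensive.
Import Order.TTheory GRing.Theory Num.Theory.
Import numFieldNormedType.Exports.
Local Open Scope classical_set_scope.
Local Open Scope ring_scope.

Definition gridpt (R : realType) (x0 dx : R) (i : int) : R := x0 + i%:~R * dx.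

Definition wki (R : realType) (w : R -> R) (dx : R) (k i : int) : R :=
  \int[@lebesgue_measure R]_(z in `[((i - 1 - k)%:~R * dx), ((i - k)%:~R * dx)])
     w z.

(* By induction on n one propagates the invariant "rho^n >= 0 and
   dx * sum_i rho_i^n <= M", where M is the total initial mass.  Under it the
   discrete Poisson equation bounds |dS_i| by dx * sum_j |nu_j - rho_j|
   <= M (1 + w0), since the weights w_{kj} of each row have total variation
   at most w0; a_{i+1/2} is a secant slope of A between two such points,
   hence |a_{i+1/2}| <= c by the mean value theorem.  The Poisson equation
   also turns the flux into the centred form
   J_{i+1/2} = a_{i+1/2} (rho_{i+1} + rho_i) / 2, so rho^{n+1}_i is a
   combination of rho^n_{i-1}, rho^n_i, rho^n_{i+1} whose coefficients are
   nonnegative under the CFL condition, and the total mass changes only by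
   boundary fluxes that point outwards. *)
From HB Require Import structures.
From mathcomp Require Import all_boot all_order all_algebra.
From mathcomp Require Import all_classical all_reals all_analysis.
From mathcomp Require Import lra ring zify.
Import Order.TTheory GRing.Theory Num.Theory.
Import numFieldNormedType.Exports.
Local Open Scope classical_set_scope.
Local Open Scope ring_scope.
Set Implicit Arguments. Unset Strict Implicit.

Lemma norm_secant_le (R : realType) (a A : R -> R) (K c : R) :
  (forall x : R, is_derive x (1 : R) A (a x)) ->
  (forall x, `|x| <= K -> `|a x| <= c) ->
  forall p q, `|p| <= K -> `|q| <= K -> p != q ->
  `|(A p - A q) / (p - q)| <= c.
Proof.
move=> hA hc.
have ordered p q : `|p| <= K -> `|q| <= K -> q < p ->
    `|(A p - A q) / (p - q)| <= c.
  move=> hp hq qp.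
  have A_cont : {within `[q, p], continuous A}.
    by apply: derivable_within_continuous => x _; exact: ex_derive.
  have [x /[!in_itv] /= /andP[qx xp] ->] := MVT qp (fun x _ => hA x) A_cont.
  rewrite mulfK ?subr_eq0 ?gt_eqF //; apply: hc.
  move: hp hq; rewrite !ler_norml => /andP[? ?] /andP[? ?].
  by apply/andP; split; lra.
move=> p q hp hq; rewrite neq_lt => /orP[pq|]; last exact: ordered.
rewrite -[A p - A q]opprB -[p - q]opprB invrN mulrNN; exact: ordered.
Qed.

Lemma Rintegral_cc_split (R : realType) (g : R -> R) (L u v : R) :
  (@lebesgue_measure R).-integrable setT (EFin \o g) -> L <= u -> u <= v ->
  \int[@lebesgue_measure R]_(x in `[u, v]) g x =
  \int[@lebesgue_measure R]_(x in `[L, v]) g x -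
  \int[@lebesgue_measure R]_(x in `[L, u]) g x.
Proof.
move=> hg Lu uv.
rewrite (@Rintegral_itvB R g (BLeft L) (BRight v) u) //; last exact: integrableS hg.
by rewrite Rintegral_itv_obnd_cbnd //; exact: integrableS hg.
Qed.

(* The intervals of integration of w_{k0}, w_{k1}, ... tile a half-line. *)
Lemma sum_norm_wki_le (R : realType) (w : R -> R) (dx : R) (k : int) (N : nat) :
  0 < dx -> (@lebesgue_measure R).-integrable setT (EFin \o w) ->
  \sum_(0 <= j < N) `|wki w dx k j%:Z| <= \int[@lebesgue_measure R]_z `|w z|.
Proof.
move=> hdx hw.
have habs : (@lebesgue_measure R).-integrable setT (EFin \o (fun x => `|w x|)).
  exact: integrable_norm.
pose t (j : nat) : R := (j%:Z - 1 - k)%:~R * dx.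
pose F (v : R) := \int[@lebesgue_measure R]_(x in `[t 0, v]) `|w x|.
have t_mono j m : (j <= m)%N -> t j <= t m.
  by move=> jm; rewrite ler_pM2r // ler_int; lia.
have tS (j : nat) : (j%:Z - k)%:~R * dx = t j.+1.
  by rewrite /t; congr (_%:~R * _); lia.
apply: (@le_trans _ _ (\sum_(0 <= j < N) (F (t j.+1) - F (t j)))).
  apply: ler_sum => j _; rewrite /wki tS.
  apply: le_trans (le_normr_Rintegral _ _) _ => //; first exact: integrableS hw.
  by rewrite /F -Rintegral_cc_split // t_mono.
rewrite telescope_sumr //; apply: (@le_trans _ _ (F (t N))).
  rewrite /F lerBlDr lerDl; apply: Rintegral_ge0 => x _; exact: normr_ge0.
rewrite /F /Rintegral; apply: fine_le.
- exact: integrable_fin_num (integrableS _ _ _ habs).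
- exact: integrable_fin_num habs.
by apply: ge0_subset_integral => //; case/integrableP: habs.
Qed.

Lemma sum_cell_mass_le (R : realType) (mu : {finite_measure set R -> \bar R})
    (x0 dx : R) (N : nat) : 0 < dx ->
  \sum_(1 <= k < N) fine (mu [set` `[gridpt x0 dx k%:Z, gridpt x0 dx (k%:Z + 1)[])
  <= fine (mu setT).
Proof.
move=> hdx; pose g (k : nat) := gridpt x0 dx k%:Z.
have gS (k : nat) : gridpt x0 dx (k%:Z + 1) = g k.+1.
  by rewrite /g; congr gridpt; lia.
have g_mono k m : (k <= m)%N -> g k <= g m.
  by move=> km; rewrite /g /gridpt lerD2l ler_pM2r // ler_int; lia.
have cells_union m : (1 <= m)%N ->
    \sum_(1 <= k < m) fine (mu [set` `[gridpt x0 dx k%:Z, gridpt x0 dx (k%:Z + 1)[])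
    = fine (mu [set` `[g 1, g m[]).
  elim: m => [//|m IH] hm.
  have [->|m_gt0] := posnP m; first by rewrite big_geq // set_itvco0 measure0.
  rewrite big_nat_recr //= IH // gS.
  rewrite (@itv_bndbnd_setU _ _ (BLeft (g 1)) (BLeft (g m)) (BLeft (g m.+1)));
    try by rewrite bnd_simp g_mono.
  rewrite measureU //; last first.
    rewrite -subset0 => x [] /=; rewrite !in_itv /= => /andP[_ h1] /andP[h2 _].
    by move: (lt_le_trans h1 h2); rewrite ltxx.
  by rewrite fineD //; exact: fin_num_measure.
have [N_le1|N_gt1] := leqP N 1.
  by rewrite big_geq // fine_ge0 // measure_ge0.
rewrite cells_union 1?ltnW //; apply: fine_le; try exact: fin_num_measure.
by apply: le_measure => //; rewrite inE.
Qed.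

Lemma sum_norm_conv_le (R : realDomainType) (N : nat) (w0 : R) (rho nu : int -> R)
    (W : int -> int -> R) :
  (forall i : int, nu i = \sum_(1 <= k < N.+1) rho k%:Z * W k%:Z i) ->
  (forall k : nat, (1 <= k <= N)%N -> 0 <= rho k%:Z) ->
  (forall k : nat, \sum_(0 <= j < N.+1) `|W k%:Z j%:Z| <= w0) ->
  \sum_(0 <= j < N.+1) `|nu j%:Z| <= (\sum_(1 <= k < N.+1) rho k%:Z) * w0.
Proof.
move=> nu_def rho_ge0 W_le.
apply: (@le_trans _ _
    (\sum_(0 <= j < N.+1) \sum_(1 <= k < N.+1) rho k%:Z * `|W k%:Z j%:Z|)).
  apply: ler_sum => j _; rewrite nu_def.
  apply: le_trans (ler_norm_sum _ _ _) _.
  rewrite big_nat_cond [leRHS]big_nat_cond; apply: ler_sum => k /andP[hk _].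
  by rewrite normrM ger0_norm // rho_ge0.
rewrite exchange_big_nat /= mulr_suml big_nat_cond [leRHS]big_nat_cond.
apply: ler_sum => k /andP[hk _].
by rewrite -mulr_sumr ler_wpM2l ?rho_ge0.
Qed.

Section TimeLevel.
Variables (R : realType) (Nx : nat) (dx : R) (A : R -> R).
Variables (S nu rho dS an J : int -> R).
Hypothesis dx_gt0 : 0 < dx.
Hypothesis S0 : S 0 = 0.
Hypothesis S1 : S 1 = 0.
Hypothesis poisson : forall i : int, (0 <= i <= Nx%:Z)%R ->
  - (S (i + 1) - 2 * S i + S (i - 1)) / dx ^+ 2 + nu i = rho i.
Hypothesis dS_def : forall i : int, (0 <= i <= Nx%:Z)%R ->
  dS i = (S (i + 1) - S (i - 1)) / (2 * dx).
Hypothesis an_def : forall i : int, (0 <= i < Nx%:Z)%R ->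
  an i = if dS (i + 1) == dS i then 0
         else (A (dS (i + 1)) - A (dS i)) / (dS (i + 1) - dS i).
Hypothesis J_def : forall i : int, (0 <= i < Nx%:Z)%R ->
  J i = - (A (dS (i + 1)) - A (dS i)) / dx + an i * ((nu (i + 1) + nu i) / 2).

Lemma second_difference_S (i : int) : (0 <= i <= Nx%:Z)%R ->
  S (i + 1) - 2 * S i + S (i - 1) = dx ^+ 2 * (nu i - rho i).
Proof. by move=> hi; rewrite -(poisson hi); field; rewrite gt_eqF. Qed.

Lemma increment_S (m : nat) : (m <= Nx)%N ->
  S (m%:Z + 1) - S m%:Z = dx ^+ 2 * \sum_(1 <= j < m.+1) (nu j%:Z - rho j%:Z).
Proof.
elim: m => [|m IH] hm; first by rewrite big_geq // S1 S0 subrr mulr0.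
have := @second_difference_S m.+1; have -> : m.+1%:Z - 1 = m by lia.
move=> /(_ ltac:(lia)) recursion.
rewrite big_nat_recr //= mulrDr -IH 1?ltnW //; have -> : m%:Z + 1 = m.+1 by lia.
lra.
Qed.

Lemma norm_increment_S_le (j : int) : (-1 <= j <= Nx%:Z)%R ->
  `|S (j + 1) - S j| <= dx ^+ 2 * \sum_(0 <= k < Nx.+1) `|nu k%:Z - rho k%:Z|.
Proof.
have dx2_ge0 : 0 <= dx ^+ 2 by rewrite exprn_ge0 // ltW.
have sum_ge0 m n : 0 <= \sum_(m <= k < n) `|nu k%:Z - rho k%:Z| by apply: sumr_ge0.
rewrite big_ltn //; case: j => [m|m] hj.
  rewrite increment_S; last by lia.
  rewrite normrM ger0_norm // ler_wpM2l //.
  apply: le_trans (ler_norm_sum _ _ _) _.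
  rewrite (@big_cat_nat _ _ _ m.+1 1 Nx.+1) //=; try lia.
  by have := sum_ge0 m.+1 Nx.+1; have := normr_ge0 (nu 0 - rho 0); lra.
(* The Poisson equation at i = 0 determines the ghost value S(-1). *)
have -> : Negz m = -1 by lia.
have := @second_difference_S 0; rewrite add0r sub0r S0 S1 => /(_ ltac:(lia)) e.
have -> : S (-1) = dx ^+ 2 * (nu 0 - rho 0) by lra.
rewrite sub0r normrN normrM ger0_norm // ler_wpM2l //.
by rewrite lerDl.
Qed.

Lemma norm_dS_le (i : int) : (0 <= i <= Nx%:Z)%R ->
  `|dS i| <= dx * \sum_(0 <= k < Nx.+1) `|nu k%:Z - rho k%:Z|.
Proof.
move=> hi; set E := \sum_(0 <= k < Nx.+1) _.
have up := @norm_increment_S_le i ltac:(lia).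
have down := @norm_increment_S_le (i - 1) ltac:(lia); rewrite subrK in down.
have -> : dS i = ((S (i + 1) - S i) + (S i - S (i - 1))) / (2 * dx).
  by rewrite dS_def // addrA subrK.
have two_dx_gt0 : 0 < 2 * dx by rewrite mulr_gt0.
rewrite normrM normfV (gtr0_norm two_dx_gt0) ler_pdivrMr //.
apply: le_trans (ler_normD _ _) _.
have -> : dx * E * (2 * dx) = dx ^+ 2 * E + dx ^+ 2 * E by ring.
exact: lerD.
Qed.

Lemma flux_centered (i : int) : (0 <= i < Nx%:Z)%R ->
  J i = an i * (rho (i + 1) + rho i) / 2.
Proof.
move=> hi.
have secant : A (dS (i + 1)) - A (dS i) = an i * (dS (i + 1) - dS i).
  rewrite an_def //; case: eqP => [->|/eqP neq]; first by rewrite !subrr mulr0.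
  by rewrite divfK // subr_eq0.
have dS_step : dS (i + 1) - dS i = dx * ((nu (i + 1) - rho (i + 1)) + (nu i - rho i)) / 2.
  have e0 := @second_difference_S i ltac:(lia).
  have e1 := @second_difference_S (i + 1) ltac:(lia); rewrite addrK in e1.
  rewrite !dS_def ?addrK; try lia.
  rewrite -mulrBl (_ : _ - _ = dx ^+ 2 * (nu (i + 1) - rho (i + 1) + (nu i - rho i))).
    by field; rewrite gt_eqF.
  lra.
by rewrite J_def // secant dS_step; field; rewrite gt_eqF.
Qed.

Section MassBound.
Variables (w a : R -> R) (w0 c M : R).
Hypothesis nu_def : forall i : int,
  nu i = \sum_(1 <= k < Nx.+1) rho k%:Z * wki w dx k%:Z i.
Hypothesis w_int : (@lebesgue_measure R).-integrable setT (EFin \o w).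
Hypothesis w0_def : w0 = \int[@lebesgue_measure R]_z `|w z|.
Hypothesis A_deriv : forall x : R, is_derive x (1 : R) A (a x).
Hypothesis a_le : forall x, `|x| <= M * (1 + w0) -> `|a x| <= c.
Hypothesis rho_ge0 : forall i : int, (0 <= i <= Nx%:Z)%R -> 0 <= rho i.
Hypothesis rho0 : rho 0 = 0.
Hypothesis mass_le : dx * \sum_(1 <= k < Nx.+1) rho k%:Z <= M.

Lemma norm_dS_le_mass (j : int) : (0 <= j <= Nx%:Z)%R -> `|dS j| <= M * (1 + w0).
Proof.
move=> hj; apply: le_trans (norm_dS_le hj) _.
set s := \sum_(1 <= k < Nx.+1) rho k%:Z.
have w0_ge0 : 0 <= w0 by rewrite w0_def; apply: Rintegral_ge0.
have nu_le : \sum_(0 <= k < Nx.+1) `|nu k%:Z| <= s * w0.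
  apply: sum_norm_conv_le nu_def _ _ => [k hk|k]; first by apply: rho_ge0; lia.
  by rewrite w0_def; exact: sum_norm_wki_le.
have rho_eq : \sum_(0 <= k < Nx.+1) `|rho k%:Z| = s.
  rewrite big_ltn // rho0 normr0 add0r big_nat_cond [RHS]big_nat_cond.
  by apply: eq_bigr => k /andP[hk _]; rewrite ger0_norm // rho_ge0 //; lia.
have dev_le : \sum_(0 <= k < Nx.+1) `|nu k%:Z - rho k%:Z| <= s * w0 + s.
  rewrite -[X in _ <= _ + X]rho_eq; apply: le_trans (lerD nu_le (lexx _)).
  by rewrite -big_split /=; apply: ler_sum => k _; exact: ler_normB.
apply: (@le_trans _ _ (dx * (s * w0 + s))); first by rewrite ler_wpM2l // ltW.
have -> : dx * (s * w0 + s) = (dx * s) * (1 + w0) by ring.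
by rewrite ler_wpM2r // addr_ge0.
Qed.

Lemma norm_an_le (i : int) : (0 <= i < Nx%:Z)%R -> `|an i| <= c.
Proof.
move=> hi; have dS_le := @norm_dS_le_mass i ltac:(lia).
rewrite an_def //; case: eqP => [_|/eqP neq].
  by rewrite normr0; exact: le_trans (normr_ge0 _) (a_le dS_le).
apply: (norm_secant_le A_deriv a_le) => //; apply: norm_dS_le_mass; lia.
Qed.

End MassBound.

End TimeLevel.

Lemma LF_combination_ge0 (R : realFieldType) (lam c a0 a1 r0 r1 r2 : R) :
  0 <= lam -> 3 * c * lam <= 2 -> `|a0| <= c -> `|a1| <= c ->
  0 <= r0 -> 0 <= r1 -> 0 <= r2 ->
  0 <= r1 - lam / 2 * (a1 * (r2 + r1) / 2 - a0 * (r1 + r0) / 2)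
        + lam / 2 * c * (r2 - 2 * r1 + r0).
Proof.
rewrite !ler_norml => lam_ge0 cfl /andP[a0_lo a0_hi] /andP[a1_lo a1_hi] r0_ge0 r1_ge0 r2_ge0.
have -> : r1 - lam / 2 * (a1 * (r2 + r1) / 2 - a0 * (r1 + r0) / 2)
          + lam / 2 * c * (r2 - 2 * r1 + r0)
        = (1 - lam * c - lam * a1 / 4 + lam * a0 / 4) * r1
          + (lam * c / 2 - lam * a1 / 4) * r2 + (lam * c / 2 + lam * a0 / 4) * r0.
  by field.
by apply: addr_ge0; [apply: addr_ge0|]; apply: mulr_ge0 => //; nra.
Qed.

Section LaxFriedrichsStep.
Variables (R : realFieldType) (Nx : nat) (lam c : R) (rho rho' an J : int -> R).
Hypothesis lam_ge0 : 0 <= lam.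
Hypothesis an_le : forall i : int, (0 <= i < Nx%:Z)%R -> `|an i| <= c.
Hypothesis J_centered : forall i : int, (0 <= i < Nx%:Z)%R ->
  J i = an i * (rho (i + 1) + rho i) / 2.
Hypothesis rho_ge0 : forall i : int, (0 <= i <= Nx%:Z)%R -> 0 <= rho i.
Hypothesis rho_left : rho 0 = 0.
Hypothesis rho_right : rho Nx%:Z = 0.
Hypothesis rho'_left : rho' 0 = 0.
Hypothesis rho'_right : rho' Nx%:Z = 0.
Hypothesis update : forall i : int, (1 <= i < Nx%:Z)%R ->
  rho' i = rho i - lam / 2 * (J i - J (i - 1))
           + lam / 2 * c * (rho (i + 1) - 2 * rho i + rho (i - 1)).

Lemma LF_mass_le :
  \sum_(1 <= k < Nx.+1) rho' k%:Z <= \sum_(1 <= k < Nx.+1) rho k%:Z.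
Proof.
have [->|Nx_gt0] := posnP Nx; first by rewrite !big_geq.
rewrite !big_nat_recr //= rho_right rho'_right !addr0.
pose G (j : nat) := - (lam / 2) * J (j%:Z - 1) + lam / 2 * c * (rho j%:Z - rho (j%:Z - 1)).
have telescope : \sum_(1 <= k < Nx) (rho' k%:Z - rho k%:Z) = G Nx - G 1%N.
  apply: telescope_sumr_eq => // k hk; rewrite update; last by lia.
  rewrite /G; have -> : k.+1%:Z = k%:Z + 1 by lia.
  by rewrite addrK; ring.
have G_right : G Nx <= 0.
  have := @an_le (Nx%:Z - 1) ltac:(lia); rewrite ler_norml => /andP[lo hi].
  have -> : G Nx = - (lam * (an (Nx%:Z - 1) + 2 * c) / 4 * rho (Nx%:Z - 1)).
    by rewrite /G J_centered ?subrK ?rho_right; [field | lia].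
  by rewrite oppr_le0 mulr_ge0 ?divr_ge0 ?mulr_ge0 ?rho_ge0 //; [lra | lia].
have G_left : 0 <= G 1%N.
  have := @an_le 0 ltac:(lia); rewrite ler_norml => /andP[lo hi].
  have -> : G 1%N = lam * (2 * c - an 0) / 4 * rho 1.
    by rewrite /G subrr J_centered ?add0r ?rho_left; [field | lia].
  by rewrite mulr_ge0 ?divr_ge0 ?mulr_ge0 ?rho_ge0 //; lra.
by rewrite -subr_le0 -sumrB telescope subr_le0; exact: le_trans G_right G_left.
Qed.

Hypothesis cfl : 3 * c * lam <= 2.

Lemma LF_ge0 (i : int) : (0 <= i <= Nx%:Z)%R -> 0 <= rho' i.
Proof.
move=> hi; have [->|i_neq0] := eqVneq i 0; first by rewrite rho'_left.
have [->|i_neqN] := eqVneq i Nx%:Z; first by rewrite rho'_right.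
rewrite update ?J_centered ?subrK; try lia.
by apply: LF_combination_ge0; rewrite ?an_le ?rho_ge0 //; lia.
Qed.

End LaxFriedrichsStep.

Lemma initial_mass_le (R : realType) (mu : {finite_measure set R -> \bar R})
    (x0 dx : R) (Nx : nat) (rho : int -> R) : 0 < dx ->
  (forall i : int, (1 <= i < Nx%:Z)%R ->
     rho i = fine (mu [set` `[gridpt x0 dx i, gridpt x0 dx (i + 1)[]) / dx) ->
  rho Nx%:Z = 0 ->
  dx * \sum_(1 <= k < Nx.+1) rho k%:Z <= fine (mu setT).
Proof.
move=> dx_gt0 rho_def rho_right.
have [->|Nx_gt0] := posnP Nx; first by rewrite big_geq // mulr0 fine_ge0 ?measure_ge0.
rewrite big_nat_recr //= rho_right addr0 mulr_sumr.
rewrite (eq_big_nat _ _ (F2 := fun k : nat =>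
  fine (mu [set` `[gridpt x0 dx k%:Z, gridpt x0 dx (k%:Z + 1)[]))); last first.
  move=> k hk; rewrite rho_def; last by lia.
  by rewrite mulrC divfK ?gt_eqF.
exact: sum_cell_mass_le.
Qed.

Unset Implicit Arguments. Set Strict Implicit.
Theorem lemma2p3 (R : realType)
  (w : R -> R) (w0 : R)
  (hw_cont : continuous w)
  (hw_bdd : exists B : R, forall x, `|w x| <= B)
  (hw_int : (@lebesgue_measure R).-integrable setT (EFin \o w))
  (hw0 : w0 = \int[@lebesgue_measure R]_z `|w z|)
  (a A : R -> R) (alpha : R)
  (ha_der : forall x, derivable a x 1)
  (ha_C1 : continuous (derive1 a))
  (ha'_ge0 : forall x, 0 <= derive1 a x)
  (ha'_le : forall x, derive1 a x <= alpha)
  (hA : forall x : R, is_derive x (1 : R) A (a x))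
  (hA0 : A 0 = 0)
  (mu : {finite_measure set R -> \bar R})
  (hmu_P1 : mu.-integrable setT (fun x => (`|x|)%:E))
  (Nx : nat) (x0 dx dt : R)
  (hdx : 0 < dx) (hdt : 0 < dt)
  (hsupp : mu (~` [set` `[x0, gridpt x0 dx Nx%:Z]]) = 0%E)
  (* c = max_{|x| <= M (1 + w0)} |a x|, with M the total mass *)
  (c : R)
  (hc_ub : forall x, `|x| <= fine (mu setT) * (1 + w0) -> `|a x| <= c)
  (hc_att : exists2 x, `|x| <= fine (mu setT) * (1 + w0) & `|a x| = c)
  (* CFL condition  dt/dx <= 2/(3c)  (read as +oo when c = 0) *)
  (hCFL : 3 * c * (dt / dx) <= 2)
  (* the scheme: time index n : nat, space index i : int;
     a n i stands for a_{i+1/2}^n, J n i for J_{i+1/2}^n *)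
  (rho nu S dS an J : nat -> int -> R)
  (h_rho0 : forall i : int, (1 <= i < Nx%:Z)%R ->
     rho 0%N i = fine (mu [set` `[gridpt x0 dx i, gridpt x0 dx (i + 1)[]) / dx)
  (h_rhoL : forall n, rho n 0 = 0)
  (h_rhoR : forall n, rho n Nx%:Z = 0)
  (h_nu : forall n (i : int),
     nu n i = \sum_(1 <= k < Nx.+1) rho n k%:Z * wki w dx k%:Z i)
  (h_S0 : forall n, S n 0 = 0)
  (h_S1 : forall n, S n 1 = 0)
  (h_S : forall n (i : int), (0 <= i <= Nx%:Z)%R ->
     - (S n (i + 1) - 2 * S n i + S n (i - 1)) / dx ^+ 2 + nu n i = rho n i)
  (h_dS : forall n (i : int), (0 <= i <= Nx%:Z)%R ->
     dS n i = (S n (i + 1) - S n (i - 1)) / (2 * dx))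
  (h_a : forall n (i : int), (0 <= i < Nx%:Z)%R ->
     an n i = if dS n (i + 1) == dS n i then 0
              else (A (dS n (i + 1)) - A (dS n i)) / (dS n (i + 1) - dS n i))
  (h_J : forall n (i : int), (0 <= i < Nx%:Z)%R ->
     J n i = - (A (dS n (i + 1)) - A (dS n i)) / dx
             + an n i * ((nu n (i + 1) + nu n i) / 2))
  (h_JL : forall n, J n (-1) = 0)
  (h_JR : forall n, J n Nx%:Z = 0)
  (h_upd : forall n (i : int), (1 <= i < Nx%:Z)%R ->
     rho n.+1 i = rho n i - (dt / dx) / 2 * (J n i - J n (i - 1))
                  + (dt / dx) / 2 * c * (rho n (i + 1) - 2 * rho n i + rho n (i - 1))) :
  forall (n : nat) (i : int),
    ((0 <= i <= Nx%:Z)%R -> 0 <= rho n i) /\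
    ((0 <= i < Nx%:Z)%R -> `|an n i| <= c).
Proof.
have lam_ge0 : 0 <= dt / dx by rewrite divr_ge0 // ltW.
pose M := fine (mu setT).
pose nonneg n := forall i : int, (0 <= i <= Nx%:Z)%R -> 0 <= rho n i.
pose mass n := \sum_(1 <= k < Nx.+1) rho n k%:Z.
have an_le n : nonneg n -> dx * mass n <= M ->
    forall i : int, (0 <= i < Nx%:Z)%R -> `|an n i| <= c.
  by move=> rho_ge0 mass_le; exact: (norm_an_le hdx (h_S0 n) (h_S1 n) (h_S n)
    (h_dS n) (h_a n) (h_nu n) hw_int hw0 hA hc_ub rho_ge0 (h_rhoL n) mass_le).
have invariant n : nonneg n /\ dx * mass n <= M.
  elim: n => [|n [rho_ge0 mass_le]].
    split; last exact: initial_mass_le hdx h_rho0 (h_rhoR 0%N).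
    move=> i hi; have [->|i_neq0] := eqVneq i 0; first by rewrite h_rhoL.
    have [->|i_neqN] := eqVneq i Nx%:Z; first by rewrite h_rhoR.
    rewrite h_rho0; last by lia.
    by rewrite divr_ge0 ?fine_ge0 ?measure_ge0 ?ltW.
  have an_n := an_le n rho_ge0 mass_le.
  have J_n := flux_centered hdx (h_S n) (h_dS n) (h_a n) (h_J n).
  have upd_n := h_upd n.
  split; first exact: LF_ge0 lam_ge0 an_n J_n rho_ge0 (h_rhoL n.+1) (h_rhoR n.+1) upd_n hCFL.
  apply: le_trans mass_le; apply: ler_wpM2l; first exact: ltW.
  exact: LF_mass_le lam_ge0 an_n J_n rho_ge0 (h_rhoL n) (h_rhoR n) (h_rhoR n.+1) upd_n.
move=> n i; have [rho_ge0 mass_le] := invariant n.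
by split; [exact: rho_ge0 | exact: an_le].
Qed.
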